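(* Let $H$ be a normal subgroup of a group $G$. If $H$ and $G/H$ are Jordan groups, then any set of pairwise nonisomorphic simple nonabelian finite subgroups of $G$ is finite.
   Context: A group $G$ is called Jordan if there exists a positive integer $d$, depending only on $G$, such that every finite subgroup $K$ of $G$ contains a normal abelian subgroup of index at most $d$ in $K$. *)

From Stdlib Require Import List Arith ClassicalEpsilon.
Set Implicit Arguments.

Record gsig := GSig {
  gcar :> Type;
  gmul : gcar -> gcar -> gcar;
  gone : gcar;
  ginv : gcar -> gcar }.
Arguments gmul {g}. Arguments ginv {g}.

Record group := Group {
  gsig_of :> gsig;
  gmulA : forall x y z : gsig_of,
      gmul (gmul x y) z = gmul x (gmul y z);
  gmul1g : forall x : gsig_of, gmul (gone gsig_of) x = x;
  gmulVg : forall x : gsig_of, gmul (ginv x) x = gone gsig_of }.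

Section Preds.
Variable S : gsig.

Definition is_subgroup (P : S -> Prop) : Prop :=
  P (gone S) /\ (forall x y, P x -> P y -> P (gmul x y))
  /\ (forall x, P x -> P (ginv x)).

Definition finite_set (P : S -> Prop) : Prop :=
  exists s : list S, forall x, P x <-> In x s.

Definition abelian_set (P : S -> Prop) : Prop :=
  forall x y, P x -> P y -> gmul x y = gmul y x.

Definition normal_in (A K : S -> Prop) : Prop :=
  (forall x, A x -> K x) /\
  (forall k a, K k -> A a -> A (gmul (gmul (ginv k) a) k)).

Definition index_le (A K : S -> Prop) (d : nat) : Prop :=
  exists s : list S, length s <= d /\ (forall g, In g s -> K g) /\
    (forall k, K k -> exists g, In g s /\ A (gmul (ginv g) k)).

(* The subgroup P of S (viewed as a group in its own right) is Jordan:
   its finite subgroups are exactly the finite subgroups K of S with K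
   contained in P. *)
Definition Jordan_in (P : S -> Prop) : Prop :=
  exists d : nat, 0 < d /\
    forall K : S -> Prop, is_subgroup K -> (forall x, K x -> P x) ->
      finite_set K ->
      exists A : S -> Prop, is_subgroup A /\ normal_in A K /\
        abelian_set A /\ index_le A K d.

Definition Jordan : Prop := Jordan_in (fun _ => True).

Definition simple_subgroup (P : S -> Prop) : Prop :=
  is_subgroup P /\ (exists x, P x /\ x <> gone S) /\
  forall N : S -> Prop, is_subgroup N -> normal_in N P ->
    (forall x, N x -> x = gone S) \/ (forall x, P x -> N x).

Definition simple_nonabelian_finite_subgroup (P : S -> Prop) : Prop :=
  simple_subgroup P /\ ~ abelian_set P /\ finite_set P.

Definition isomorphic_subgroups (P Q : S -> Prop) : Prop :=
  exists f : S -> S,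
    (forall x, P x -> Q (f x)) /\
    (forall x y, P x -> P y -> f x = f y -> x = y) /\
    (forall y, Q y -> exists x, P x /\ f x = y) /\
    (forall x y, P x -> P y -> f (gmul x y) = gmul (f x) (f y)).

End Preds.
Arguments is_subgroup {S}. Arguments finite_set {S}. Arguments abelian_set {S}.
Arguments normal_in {S}. Arguments index_le {S}. Arguments Jordan_in {S}.
Arguments simple_subgroup {S}. Arguments simple_nonabelian_finite_subgroup {S}.
Arguments isomorphic_subgroups {S}.

(* The quotient G/H: its elements are the cosets gH; operations are
   computed on (chosen) representatives, which is well defined when H is a
   normal subgroup. *)
Section Quotient.
Variables (G : gsig) (H : G -> Prop).

Definition coset (g : G) : G -> Prop := fun x => H (gmul (ginv g) x).

Definition qcar : Type := { C : G -> Prop | exists g, C = coset g }.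

Definition qmk (g : G) : qcar := exist _ (coset g) (ex_intro _ g eq_refl).

Definition qrep (C : qcar) : G :=
  proj1_sig (constructive_indefinite_description _ (proj2_sig C)).

Definition quotient : gsig :=
  @GSig qcar (fun C D => qmk (gmul (qrep C) (qrep D)))
             (qmk (gone G)) (fun C => qmk (ginv (qrep C))).
End Quotient.
Arguments quotient {G}.

From Stdlib Require Import List Lia ClassicalEpsilon ProofIrrelevance
  FunctionalExtensionality PropExtensionality.
Import ListNotations.
Set Implicit Arguments.

(* Let S be a finite simple nonabelian subgroup of G. Since S :&: H is normal
   in S, either S <= H or S meets H trivially. In the first case the Jordan
   property of H gives an abelian normal subgroup of S of index <= d1; in the
   second, S embeds in G/H and the preimage in S of an abelian normal subgroup
   of its image is abelian, normal, of index <= d2. By simplicity that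
   subgroup is trivial, so |S| <= d1 + d2. Groups of bounded order have
   finitely many multiplication tables, hence finitely many isomorphism
   types. *)

Section GroupFacts.
Variable G : group.

Lemma mulgV (x : G) : gmul x (ginv x) = gone G.
Proof.
  rewrite <- (gmul1g G (gmul x (ginv x))), <- (gmulVg G (ginv x)) at 1.
  rewrite gmulA, <- (gmulA G (ginv x) x (ginv x)), gmulVg, gmul1g, gmulVg.
  reflexivity.
Qed.

Lemma mulg1 (x : G) : gmul x (gone G) = x.
Proof. rewrite <- (gmulVg G x), <- gmulA, mulgV, gmul1g. reflexivity. Qed.

Lemma mulKg (x y : G) : gmul (ginv x) (gmul x y) = y.
Proof. rewrite <- gmulA, gmulVg, gmul1g. reflexivity. Qed.

Lemma mulKVg (x y : G) : gmul x (gmul (ginv x) y) = y.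
Proof. rewrite <- gmulA, mulgV, gmul1g. reflexivity. Qed.

Lemma invg_uniq (u v : G) : gmul u v = gone G -> v = ginv u.
Proof. intro E. rewrite <- (mulKg u v), E, mulg1. reflexivity. Qed.

Lemma invgK (x : G) : ginv (ginv x) = x.
Proof. symmetry. apply invg_uniq, gmulVg. Qed.

Lemma invgM (x y : G) : ginv (gmul x y) = gmul (ginv y) (ginv x).
Proof.
  symmetry. apply invg_uniq.
  rewrite gmulA, <- (gmulA G y), mulgV, gmul1g, mulgV. reflexivity.
Qed.

Lemma eq_of_mulVg1 (a b : G) : gmul (ginv a) b = gone G -> b = a.
Proof. intro E. rewrite <- (mulKVg a b), E, mulg1. reflexivity. Qed.

End GroupFacts.

Definition card_le {S : gsig} (P : S -> Prop) (d : nat) : Prop :=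
  exists l : list S, length l <= d /\ forall x, P x -> In x l.

Definition trivial_meet {S : gsig} (P Q : S -> Prop) : Prop :=
  forall x, P x -> Q x -> x = gone S.

Definition abelian_normal_index_le {S : gsig} (K : S -> Prop) (d : nat) : Prop :=
  exists A : S -> Prop,
    is_subgroup A /\ normal_in A K /\ abelian_set A /\ index_le A K d.

Lemma card_le_weaken (S : gsig) (P : S -> Prop) d d' :
  d <= d' -> card_le P d -> card_le P d'.
Proof. intros Hd [l [Hl HP]]. exists l. split; [lia | exact HP]. Qed.

Section Quotient.
Variables (G : group) (H : G -> Prop).
Hypothesis H_subgroup : is_subgroup H.

Lemma coset_eq_iff (a b : G) : coset G H a = coset G H b <-> H (gmul (ginv a) b).
Proof.
  destruct H_subgroup as [H1 [HM HI]]. split.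
  - intro E. change (coset G H a b). rewrite E. unfold coset. rewrite gmulVg. exact H1.
  - intro Hab. apply functional_extensionality; intro z.
    apply propositional_extensionality. unfold coset. split; intro Hz.
    + replace (gmul (ginv b) z)
        with (gmul (ginv (gmul (ginv a) b)) (gmul (ginv a) z)) by
        (rewrite invgM, invgK, gmulA, mulKVg; reflexivity).
      auto.
    + replace (gmul (ginv a) z) with (gmul (gmul (ginv a) b) (gmul (ginv b) z)) by
        (rewrite gmulA, mulKVg; reflexivity).
      auto.
Qed.

Lemma qmk_eq_iff (a b : G) : qmk G H a = qmk G H b <-> H (gmul (ginv a) b).
Proof.
  rewrite <- coset_eq_iff. split.
  - intro E. exact (f_equal (@proj1_sig _ _) E).
  - apply subset_eq_compat.
Qed.

Lemma qrep_qmk (a : G) : H (gmul (ginv (qrep (qmk G H a))) a).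
Proof.
  apply coset_eq_iff. unfold qrep.
  destruct (constructive_indefinite_description _ _) as [r Er]. symmetry. exact Er.
Qed.

Hypothesis H_normal : normal_in H (fun _ => True).

Lemma qmk_mul (a b : G) :
  @gmul (quotient H) (qmk G H a) (qmk G H b) = qmk G H (gmul a b).
Proof.
  apply qmk_eq_iff.
  pose proof (qrep_qmk a) as Ha. pose proof (qrep_qmk b) as Hb.
  set (r := qrep (qmk G H a)) in *. set (r' := qrep (qmk G H b)) in *.
  replace (gmul (ginv (gmul r r')) (gmul a b)) with
    (gmul (gmul (gmul (ginv r') (gmul (ginv r) a)) r') (gmul (ginv r') b)) by
    (rewrite invgM, !gmulA, mulKVg; reflexivity).
  destruct H_subgroup as [_ [HM _]]. apply HM; [apply (proj2 H_normal) |]; auto.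
Qed.

Lemma qmk_inv (a : G) : @ginv (quotient H) (qmk G H a) = qmk G H (ginv a).
Proof.
  apply qmk_eq_iff. rewrite invgK.
  pose proof (qrep_qmk a) as Ha. destruct H_subgroup as [_ [_ HI]].
  pose proof (proj2 H_normal (ginv a) _ I (HI _ Ha)) as X.
  rewrite invgK, invgM, invgK, !gmulA, mulKVg in X. exact X.
Qed.

Definition qimage (S : G -> Prop) : quotient H -> Prop :=
  fun C => exists x, S x /\ C = qmk G H x.

Definition qpreimage (S : G -> Prop) (A : quotient H -> Prop) : G -> Prop :=
  fun x => S x /\ A (qmk G H x).

Variable S : G -> Prop.
Hypothesis S_subgroup : is_subgroup S.

Lemma qimage_subgroup : is_subgroup (qimage S).
Proof.
  destruct S_subgroup as [S1 [SM SI]]. split; [|split].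
  - exists (gone G). auto.
  - intros C D [x [Sx ->]] [y [Sy ->]]. exists (gmul x y). rewrite qmk_mul. auto.
  - intros C [x [Sx ->]]. exists (ginv x). rewrite qmk_inv. auto.
Qed.

Lemma qimage_finite : finite_set S -> finite_set (qimage S).
Proof.
  intros [s Hs]. exists (map (qmk G H) s). intro C. split.
  - intros [x [Sx ->]]. apply in_map, Hs, Sx.
  - intro HC. apply in_map_iff in HC. destruct HC as [x [<- Hx]].
    exists x. split; [apply Hs, Hx | reflexivity].
Qed.

Variable A : quotient H -> Prop.

Lemma qpreimage_subgroup : is_subgroup A -> is_subgroup (qpreimage S A).
Proof.
  destruct S_subgroup as [S1 [SM SI]]. intros [A1 [AM AI]].
  unfold qpreimage. split; [|split].
  - auto.
  - intros x y [Sx Ax] [Sy Ay]. rewrite <- qmk_mul. auto.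
  - intros x [Sx Ax]. rewrite <- qmk_inv. auto.
Qed.

Lemma qpreimage_normal : normal_in A (qimage S) -> normal_in (qpreimage S A) S.
Proof.
  intros [_ An]. destruct S_subgroup as [_ [SM SI]]. unfold qpreimage.
  split; [intros x [Sx _]; exact Sx |].
  intros k a Sk [Sa Aa]. split; [auto |].
  rewrite <- !qmk_mul, <- qmk_inv. apply An; [exists k |]; auto.
Qed.

(* Commutators of elements of the preimage lie in H :&: S, which is trivial. *)
Lemma qpreimage_abelian :
  trivial_meet H S -> abelian_set A -> abelian_set (qpreimage S A).
Proof.
  intros Hmeet Aab x y [Sx Ax] [Sy Ay].
  pose proof (Aab _ _ Ax Ay) as E. rewrite !qmk_mul, qmk_eq_iff in E.
  symmetry. apply eq_of_mulVg1, Hmeet; [exact E |].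
  destruct S_subgroup as [_ [SM SI]]. auto.
Qed.

Lemma qpreimage_index_le d : index_le A (qimage S) d -> index_le (qpreimage S A) S d.
Proof.
  intros [s [Hlen [Hs Hcov]]].
  set (lift := fun C => epsilon (inhabits (gone G)) (fun t => S t /\ C = qmk G H t)).
  assert (lift_spec : forall C, qimage S C -> S (lift C) /\ C = qmk G H (lift C)).
  { intros C HC. exact (epsilon_spec _ _ HC). }
  exists (map lift s). rewrite length_map. split; [exact Hlen | split].
  - intros t Ht. apply in_map_iff in Ht. destruct Ht as [C [<- HC]].
    apply lift_spec, Hs, HC.
  - intros x Sx. destruct (Hcov (qmk G H x)) as [C [HC AC]]; [exists x; auto |].
    destruct (lift_spec C (Hs C HC)) as [St EC].
    exists (lift C). split; [apply in_map, HC |].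
    destruct S_subgroup as [_ [SM SI]]. split; [auto |].
    rewrite <- qmk_mul, <- qmk_inv, <- EC. exact AC.
Qed.

End Quotient.
Arguments qimage {G} H S _.
Arguments qpreimage {G} H S A _.

Lemma Jordan_quotient_trivial_meet (G : group) (H : G -> Prop) :
  is_subgroup H -> normal_in H (fun _ => True) -> Jordan (quotient H) ->
  exists d, forall S : G -> Prop, is_subgroup S -> finite_set S ->
    trivial_meet H S -> abelian_normal_index_le S d.
Proof.
  intros HH Hn [d [_ J]]. exists d. intros S Ssub Sfin Hmeet.
  destruct (J (qimage H S)) as [A [Asub [An [Aab Aind]]]].
  - apply qimage_subgroup; assumption.
  - intros _ _. exact I.
  - apply qimage_finite, Sfin.
  - exists (qpreimage H S A). split; [| split; [| split]].
    + apply qpreimage_subgroup; assumption.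
    + apply qpreimage_normal; assumption.
    + apply qpreimage_abelian; assumption.
    + apply qpreimage_index_le; assumption.
Qed.

Section SimpleSubgroups.
Variables (G : group) (S : G -> Prop).
Hypothesis S_simple : simple_subgroup S.

Lemma simple_sub_or_trivial_meet (H : G -> Prop) :
  is_subgroup H -> normal_in H (fun _ => True) ->
  (forall x, S x -> H x) \/ trivial_meet H S.
Proof.
  intros [H1 [HM HI]] [_ Hn]. destruct S_simple as [[S1 [SM SI]] [_ Ssimp]].
  destruct (Ssimp (fun x => H x /\ S x)) as [Htriv | Hall].
  - split; [|split]; intros; intuition.
  - split; [intros x [_ Sx]; exact Sx |].
    intros k a Sk [Ha Sa]. split; [apply Hn |]; auto.
  - right. intros x Hx Sx. auto.
  - left. intros x Sx. apply Hall, Sx.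
Qed.

Lemma simple_card_le d :
  ~ abelian_set S -> abelian_normal_index_le S d -> card_le S d.
Proof.
  intros Snab [A [Asub [An [Aab [s [Hlen [_ Hcov]]]]]]].
  destruct S_simple as [_ [_ Ssimp]].
  destruct (Ssimp A Asub An) as [Atriv | Aall].
  - exists s. split; [exact Hlen |]. intros x Sx.
    destruct (Hcov x Sx) as [g [gin Ag]].
    apply Atriv, eq_of_mulVg1 in Ag. subst. exact gin.
  - exfalso. apply Snab. intros x y Sx Sy. apply Aab; auto.
Qed.

End SimpleSubgroups.

(* Isomorphism types of finite subgroups are detected by multiplication tables
   whose entries are positions in a duplicate-free enumeration. *)
Fixpoint index_in {A : Type} (x : A) (s : list A) : nat :=
  match s with
  | [] => 0
  | a :: s' => if excluded_middle_informative (a = x) then 0 else S (index_in x s')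
  end.

Lemma index_in_lt A (x : A) s : In x s -> index_in x s < length s.
Proof.
  induction s as [|a s IH]; simpl; [tauto |].
  destruct (excluded_middle_informative (a = x)); [lia |].
  intros [E | I]; [congruence |]. specialize (IH I). lia.
Qed.

Lemma nth_index_in A (x : A) s d : In x s -> nth (index_in x s) s d = x.
Proof.
  induction s as [|a s IH]; simpl; [tauto |].
  destruct (excluded_middle_informative (a = x)); [auto |].
  intros [E | I]; [congruence | auto].
Qed.

Lemma index_in_nth A (s : list A) i d :
  NoDup s -> i < length s -> index_in (nth i s d) s = i.
Proof.
  revert i; induction s as [|a s IH]; simpl; intros i ND Hi; [lia |].
  inversion ND as [|? ? Ha Hs]; subst.
  destruct i as [|i].
  - destruct (excluded_middle_informative (a = a)); congruence.
  - destruct (excluded_middle_informative (a = nth i s d)) as [E | E].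
    + exfalso. apply Ha. rewrite E. apply nth_In. lia.
    + rewrite IH; auto. lia.
Qed.

Lemma nth_map_lt A B (f : A -> B) l n d d' :
  n < length l -> nth n (map f l) d' = f (nth n l d).
Proof.
  intro Hn. rewrite nth_indep with (d' := f d) by (rewrite length_map; exact Hn).
  apply map_nth.
Qed.

Definition mul_table {G : group} (s : list G) : list (list nat) :=
  map (fun a => map (fun b => index_in (gmul a b) s) s) s.

Lemma mul_table_entry (G : group) (s : list G) i j :
  i < length s -> j < length s ->
  nth j (nth i (mul_table s) []) 0
  = index_in (gmul (nth i s (gone G)) (nth j s (gone G))) s.
Proof.
  intros Hi Hj. unfold mul_table.
  rewrite nth_map_lt with (d := gone G) by exact Hi.
  rewrite nth_map_lt with (d := gone G) by exact Hj. reflexivity.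
Qed.

Section TableIsomorphism.
Variables (G : group) (S1 S2 : G -> Prop) (s1 s2 : list G).
Hypotheses (S1_mul : forall x y, S1 x -> S1 y -> S1 (gmul x y))
           (S2_mul : forall x y, S2 x -> S2 y -> S2 (gmul x y))
           (s1_uniq : NoDup s1) (s2_uniq : NoDup s2)
           (s1_enum : forall x, S1 x <-> In x s1) (s2_enum : forall x, S2 x <-> In x s2)
           (tables_eq : mul_table s1 = mul_table s2).

Lemma mul_table_iso : isomorphic_subgroups S1 S2.
Proof.
  assert (L : length s1 = length s2).
  { pose proof (f_equal (@length _) tables_eq) as X.
    unfold mul_table in X. rewrite !length_map in X. exact X. }
  exists (fun x => nth (index_in x s1) s2 (gone G)). split; [|split; [|split]].
  - intros x Hx. apply s2_enum, nth_In. rewrite <- L. apply index_in_lt, s1_enum, Hx.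
  - intros x y Hx Hy Exy. apply s1_enum in Hx, Hy.
    pose proof (index_in_lt _ _ Hx). pose proof (index_in_lt _ _ Hy).
    apply (proj1 (NoDup_nth s2 (gone G)) s2_uniq) in Exy; try lia.
    rewrite <- (nth_index_in x s1 (gone G)), <- (nth_index_in y s1 (gone G)), Exy;
      auto.
  - intros y Hy. apply s2_enum in Hy. pose proof (index_in_lt _ _ Hy).
    exists (nth (index_in y s2) s1 (gone G)). split.
    + apply s1_enum, nth_In. lia.
    + rewrite index_in_nth by (auto; lia). apply nth_index_in, Hy.
  - intros x y Hx Hy. pose proof (S1_mul Hx Hy) as Hxy.
    apply s1_enum in Hx, Hy, Hxy.
    pose proof (index_in_lt _ _ Hx). pose proof (index_in_lt _ _ Hy).
    set (i := index_in x s1) in *. set (j := index_in y s1) in *.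
    assert (E : index_in (gmul x y) s1
                = index_in (gmul (nth i s2 (gone G)) (nth j s2 (gone G))) s2).
    { rewrite <- mul_table_entry by lia. rewrite <- tables_eq, mul_table_entry by lia.
      unfold i, j. rewrite !nth_index_in; auto. }
    rewrite E. apply nth_index_in, s2_enum, S2_mul; apply s2_enum, nth_In; lia.
Qed.

End TableIsomorphism.

Fixpoint lists_upto {A : Type} (xs : list A) (n : nat) : list (list A) :=
  match n with
  | 0 => [[]]
  | S n' => [] :: flat_map (fun a => map (cons a) (lists_upto xs n')) xs
  end.

Lemma in_lists_upto A (xs : list A) n (l : list A) :
  length l <= n -> (forall a, In a l -> In a xs) -> In l (lists_upto xs n).
Proof.
  revert l; induction n as [|n IH]; intros l Hl Hx; destruct l as [|a l]; simpl in *.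
  - left; reflexivity.
  - lia.
  - left; reflexivity.
  - right. apply in_flat_map. exists a. split; auto. apply in_map, IH; auto. lia.
Qed.

Lemma mul_table_in (G : group) (s : list G) D :
  length s <= D -> (forall a b, In a s -> In b s -> In (gmul a b) s) ->
  In (mul_table s) (lists_upto (lists_upto (seq 0 D) D) D).
Proof.
  intros Hl Hc. apply in_lists_upto.
  - unfold mul_table. rewrite length_map. exact Hl.
  - intros r Hr. apply in_map_iff in Hr. destruct Hr as [a [<- Ha]].
    apply in_lists_upto; [rewrite length_map; exact Hl |].
    intros k Hk. apply in_map_iff in Hk. destruct Hk as [b [<- Hb]].
    apply in_seq. pose proof (index_in_lt _ _ (Hc a b Ha Hb)). lia.
Qed.

(* Each member of [F] is the chosen representative of its multiplication
   table, and only finitely many tables have size at most [D]. *)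
Lemma nonisomorphic_bounded_family_finite (G : group) (F : (G -> Prop) -> Prop) D :
  (forall S, F S -> (forall x y, S x -> S y -> S (gmul x y)) /\ finite_set S /\
     card_le S D) ->
  (forall S1 S2, F S1 -> F S2 -> isomorphic_subgroups S1 S2 -> S1 = S2) ->
  exists l : list (G -> Prop), forall S, F S -> In S l.
Proof.
  intros HF Hiso.
  set (has_table := fun c (S : G -> Prop) =>
     F S /\ (forall x y, S x -> S y -> S (gmul x y)) /\
     exists s, NoDup s /\ (forall x, S x <-> In x s) /\ mul_table s = c).
  set (repr := fun c => epsilon (inhabits (fun _ : G => False)) (has_table c)).
  exists (map repr (lists_upto (lists_upto (seq 0 D) D) D)).
  intros S FS. destruct (HF S FS) as [Smul [[s0 Hs0] [l [Hl Hsl]]]].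
  set (s := nodup (fun a b : G => excluded_middle_informative (a = b)) s0).
  assert (s_enum : forall x, S x <-> In x s).
  { intro x. unfold s. rewrite nodup_In. apply Hs0. }
  assert (s_uniq : NoDup s) by apply NoDup_nodup.
  assert (s_len : length s <= D).
  { enough (length s <= length l) by lia. apply NoDup_incl_length; [exact s_uniq |].
    intros x Hx. apply Hsl, s_enum, Hx. }
  assert (S_table : has_table (mul_table s) S)
    by (repeat split; auto; exists s; auto).
  destruct (epsilon_spec (inhabits (fun _ : G => False)) _ (ex_intro _ S S_table))
    as [FS' [Smul' [s' [s'_uniq [s'_enum Ts']]]]].
  apply in_map_iff. exists (mul_table s). split.
  - symmetry. apply Hiso; [exact FS | exact FS' |].
    apply mul_table_iso with s s'; auto.
  - apply mul_table_in; [exact s_len |].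
    intros a b Ha Hb. apply s_enum, Smul; apply s_enum; assumption.
Qed.

Theorem theorem1p12 (G : group) (H : G -> Prop) :
  is_subgroup H -> normal_in H (fun _ => True) ->
  Jordan_in H -> Jordan (quotient H) ->
  forall F : (G -> Prop) -> Prop,
    (forall S, F S -> simple_nonabelian_finite_subgroup S) ->
    (forall S1 S2, F S1 -> F S2 -> isomorphic_subgroups S1 S2 -> S1 = S2) ->
    exists l : list (G -> Prop), forall S, F S -> In S l.
Proof.
  intros HH Hn [d1 [_ JH]] JQ F HF Hiso.
  destruct (@Jordan_quotient_trivial_meet G H HH Hn JQ) as [d2 JQ'].
  apply nonisomorphic_bounded_family_finite with (D := d1 + d2); [| exact Hiso].
  intros S FS. destruct (HF S FS) as [Ssimp [Snab Sfin]].
  pose proof Ssimp as [[_ [Smul _]] _].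
  split; [exact Smul | split; [exact Sfin |]].
  destruct (simple_sub_or_trivial_meet G Ssimp HH Hn) as [SH | Smeet].
  - apply card_le_weaken with d1; [lia |].
    apply simple_card_le; auto. apply JH; [apply Ssimp | exact SH | exact Sfin].
  - apply card_le_weaken with d2; [lia |].
    apply simple_card_le; auto. apply JQ'; [apply Ssimp | exact Sfin | exact Smeet].
Qed.
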